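(* Let $e\in\mathbb{R}^n$ satisfy $\|e\|=\sqrt n$, and let $0<\beta\le\alpha<\sqrt n$. Assume $\bar s$ lies in the interior of $K_e(\beta)^*$, and assume $\bar x$ solves \[ \min_x\ \bar s^Tx\quad\text{s.t.}\quad x\in e+L,\ x\in K_e(\alpha), \] where $L$ is a linear subspace with $e\notin L$ and $\bar s\notin L^\perp$. Then there exists $\bar s'\in(\bar s+L^\perp)\cap K_e(\alpha)^*$ satisfying $e^T(\bar s-\bar s')\ge\mathcal{C}_1\mathcal{C}_2\|\bar s\|$, where \[ \mathcal{C}_1:=\left(\frac{(n-\alpha^2)\|\bar x\|^2\big(1-(\beta/\alpha)^2\big)}{n-\alpha^2+(\|\bar x\|-\alpha)^2\big(1-(\beta/\alpha)^2\big)}\right)^{1/2},\qquad \mathcal{C}_2:=\frac1n\Big(\alpha\sqrt{n-\beta^2}-\beta\sqrt{n-\alpha^2}\Big). \]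
   Context: $\mathbb{R}^n$ carries the dot product and Euclidean norm $\|\cdot\|$. For $0<\gamma<\sqrt n$, $K_e(\gamma):=\{x:e^Tx\ge\gamma\|x\|\}$ and $K_e(\gamma)^*:=\{s:x^Ts\ge0\ \forall x\in K_e(\gamma)\}$ (which equals $\{s:e^Ts\ge\sqrt{n-\gamma^2}\|s\|\}$). $e+L=\{e+v:v\in L\}$, and $L^\perp$ is the orthogonal complement of $L$. *)

From mathcomp Require Import all_boot all_order all_algebra.
From mathcomp Require Import reals.
Set Implicit Arguments. Unset Strict Implicit. Unset Printing Implicit Defensive.
Import Order.TTheory GRing.Theory Num.Theory.
Local Open Scope ring_scope.

Definition dotp {R : realType} {n : nat} (u v : 'rV[R]_n) : R :=
  \sum_(i < n) u 0 i * v 0 i.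
Definition enorm {R : realType} {n : nat} (u : 'rV[R]_n) : R :=
  Num.sqrt (dotp u u).

Definition Kcone {R : realType} {n : nat} (e : 'rV[R]_n) (g : R) (x : 'rV[R]_n) : Prop :=
  g * enorm x <= dotp e x.

Definition Kdual {R : realType} {n : nat} (e : 'rV[R]_n) (g : R) (s : 'rV[R]_n) : Prop :=
  forall x, Kcone e g x -> 0 <= dotp x s.

Definition interior_of {R : realType} {n : nat} (S : 'rV[R]_n -> Prop) (s : 'rV[R]_n) : Prop :=
  exists2 eps : R, 0 < eps & forall t, enorm (t - s) < eps -> S t.

Definition orthc {R : realType} {n : nat} (L : {vspace 'rV[R]_n}) (s : 'rV[R]_n) : Prop :=
  forall v, v \in L -> dotp v s = 0.

(* Since e itself is a feasible point interior to K_e(alpha) and sbar is not orthogonal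
   to L, the minimizer xbar must lie on the boundary e^T x = alpha ||x||.  First-order
   optimality there says that sbar agrees, modulo L^perp, with lam a for some lam >= 0,
   where a = e - (alpha / ||xbar||) xbar is the gradient of x |-> e^T x - alpha ||x||
   at xbar; a lies in K_e(alpha)^* by Cauchy-Schwarz.  With s' = lam a one gets
   e^T (sbar - s') = sbar^T xbar, and splitting xbar and sbar into their components
   along e and orthogonal to e, using e^T xbar = alpha ||xbar|| and
   e^T sbar >= sqrt (n - beta^2) ||sbar|| (as sbar lies in K_e(beta)^* ), bounds this
   below by ||xbar|| C2 ||sbar|| >= C1 C2 ||sbar||. *)

From mathcomp Require Import all_boot all_order all_algebra.
From mathcomp Require Import reals.
From mathcomp Require Import ring lra.
Set Implicit Arguments. Unset Strict Implicit. Unset Printing Implicit Defensive.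
Import Order.TTheory GRing.Theory Num.Theory.
Local Open Scope ring_scope.

Section DotProduct.
Variables (R : realType) (n : nat).
Implicit Types (u v w : 'rV[R]_n) (k : R).

Lemma dotpC u v : dotp u v = dotp v u.
Proof. by apply: eq_bigr => i _; rewrite mulrC. Qed.

Lemma dotpDl u v w : dotp (u + v) w = dotp u w + dotp v w.
Proof. by rewrite /dotp -big_split; apply: eq_bigr => i _; rewrite mxE mulrDl. Qed.

Lemma dotpZl k u v : dotp (k *: u) v = k * dotp u v.
Proof. by rewrite /dotp mulr_sumr; apply: eq_bigr => i _; rewrite mxE mulrA. Qed.

Lemma dotpNl u v : dotp (- u) v = - dotp u v.
Proof. by rewrite -scaleN1r dotpZl mulN1r. Qed.

Lemma dotpBl u v w : dotp (u - v) w = dotp u w - dotp v w.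
Proof. by rewrite dotpDl dotpNl. Qed.

Lemma dotpDr u v w : dotp u (v + w) = dotp u v + dotp u w.
Proof. by rewrite dotpC dotpDl !(dotpC u). Qed.

Lemma dotpZr k u v : dotp u (k *: v) = k * dotp u v.
Proof. by rewrite dotpC dotpZl dotpC. Qed.

Lemma dotpNr u v : dotp u (- v) = - dotp u v.
Proof. by rewrite dotpC dotpNl dotpC. Qed.

Lemma dotpBr u v w : dotp u (v - w) = dotp u v - dotp u w.
Proof. by rewrite dotpDr dotpNr. Qed.

Lemma dotp0l u : dotp 0 u = 0.
Proof. by rewrite -(scale0r 0) dotpZl mul0r. Qed.

Lemma dotpp_ge0 u : 0 <= dotp u u.
Proof. by apply: sumr_ge0 => i _; rewrite -expr2 sqr_ge0. Qed.

Lemma dotpp_eq0 u : dotp u u = 0 -> u = 0.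
Proof.
move=> /psumr_eq0P u0; apply/rowP => i; rewrite mxE; apply/eqP.
by rewrite -sqrf_eq0 expr2 u0 // => j _; rewrite -expr2 sqr_ge0.
Qed.

Lemma enorm_ge0 u : 0 <= enorm u.
Proof. exact: sqrtr_ge0. Qed.

Lemma enorm_sqr u : enorm u ^+ 2 = dotp u u.
Proof. by rewrite sqr_sqrtr // dotpp_ge0. Qed.

Lemma enorm0 : enorm (0 : 'rV[R]_n) = 0.
Proof. by rewrite /enorm dotp0l sqrtr0. Qed.

Lemma enorm_gt0 u : u != 0 -> 0 < enorm u.
Proof.
move=> u0; rewrite lt_def enorm_ge0 andbT; apply: contra_neq u0 => u0.
by apply: dotpp_eq0; rewrite -enorm_sqr u0 expr0n.
Qed.

Lemma dotp_sqr_le u v : dotp u v ^+ 2 <= dotp u u * dotp v v.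
Proof.
have [->|v0] := eqVneq v 0; first by rewrite dotpC !dotp0l expr2 !mulr0.
have vv_gt0 : 0 < dotp v v.
  by rewrite lt_def dotpp_ge0 andbT; apply: contra_neq v0 => /dotpp_eq0.
pose t := dotp u v / dotp v v.
have tvv : t * dotp v v = dotp u v by rewrite mulfVK ?gt_eqF.
have := dotpp_ge0 (u - t *: v).
rewrite !(dotpBl, dotpBr, dotpZl, dotpZr) (dotpC v u) tvv subrr mulr0 subr0 => h.
have := mulr_ge0 h (ltW vv_gt0).
by rewrite mulrBl -mulrA (mulrC (dotp u v)) mulrA tvv; lra.
Qed.

Lemma ler_dotp_enorm u v : `|dotp u v| <= enorm u * enorm v.
Proof.
rewrite -ler_sqr ?nnegrE ?mulr_ge0 ?enorm_ge0 //.
by rewrite real_normK ?num_real // exprMn !enorm_sqr dotp_sqr_le.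
Qed.

Lemma dotp_orth_sqr_le (e x s : 'rV[R]_n) :
  (dotp e e * dotp s x - dotp e x * dotp e s) ^+ 2 <=
  (dotp e e * dotp x x - dotp e x ^+ 2) * (dotp e e * dotp s s - dotp e s ^+ 2).
Proof.
set N := dotp e e; set E := dotp e x; set F := dotp e s.
have [N0|N_neq0] := eqVneq N 0.
  have e0 : e = 0 by apply: dotpp_eq0.
  by rewrite N0 /E /F e0 !dotp0l !mul0r; nra.
(* Cauchy-Schwarz for the components of x and s orthogonal to e, scaled by N *)
pose xp := N *: x - E *: e; pose sp := N *: s - F *: e.
have := dotp_sqr_le xp sp.
rewrite !(dotpBl, dotpBr, dotpZl, dotpZr) (dotpC x s) (dotpC x e) (dotpC s e) -/N -/E -/F.
have N2_gt0 : 0 < N ^+ 2 by rewrite lt_def sqr_ge0 sqrf_eq0 N_neq0.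
nra.
Qed.

End DotProduct.

Lemma interior_ofW (R : realType) (n : nat) (S : 'rV[R]_n -> Prop) s :
  interior_of S s -> S s.
Proof. by case=> eps eps_gt0; apply; rewrite subrr enorm0. Qed.

Lemma quadratic_gt0_near0 (R : realType) (c0 c1 c2 : R) :
  0 <= c0 -> 0 < c0 \/ 0 < c1 ->
  exists2 t, 0 < t & forall s, 0 < s -> s <= t -> 0 < c0 + c1 * s + c2 * s ^+ 2.
Proof.
have Nnorm_le (c : R) : - `|c| <= c by rewrite lerNl -normrN ler_norm.
have c1_lb := Nnorm_le c1; have c2_lb := Nnorm_le c2.
have c1n_ge0 := normr_ge0 c1; have c2n_ge0 := normr_ge0 c2.
move=> c0_ge0 [c0_gt0 | c1_gt0].
- pose M := `|c1| + `|c2|; pose t := c0 / (c0 + M).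
  have tM : t * (c0 + M) = c0 by rewrite mulfVK // gt_eqF // /M; lra.
  have t_gt0 : 0 < t by rewrite divr_gt0 // /M; lra.
  exists t => // s s_gt0 s_le.
  have s_le1 : s <= 1 by rewrite /M in tM; nra.
  have ss : s ^+ 2 <= s by rewrite expr2; nra.
  have := ler_wpM2l c2n_ge0 ss.
  rewrite /M expr2 in tM *; nra.
- pose t := c1 / (c1 + `|c2|).
  have tM : t * (c1 + `|c2|) = c1 by rewrite mulfVK // gt_eqF //; lra.
  have t_gt0 : 0 < t by rewrite divr_gt0 //; lra.
  exists t => // s s_gt0 s_le.
  have := mulr_gt0 s_gt0 (mulr_gt0 t_gt0 c1_gt0).
  have := ler_wpM2r (sqr_ge0 s) c2_lb.
  have := ler_wpM2l c2n_ge0 s_le.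
  rewrite expr2; nra.
Qed.

Lemma sqrt_scaled_ratio_le (R : realType) (m k X a : R) :
  0 < m -> 0 <= k <= 1 -> 0 <= X ->
  Num.sqrt (m * X ^+ 2 * k / (m + (X - a) ^+ 2 * k)) <= X.
Proof.
move=> m_gt0 /andP[k_ge0 k_le1] X_ge0.
have den_gt0 : 0 < m + (X - a) ^+ 2 * k by rewrite ltr_wpDr // mulr_ge0 ?sqr_ge0.
rewrite -[leRHS]ger0_norm // -sqrtr_sqr ler_wsqrtr // ler_pdivrMr //.
have := mulr_ge0 (sqr_ge0 X) (mulr_ge0 (sqr_ge0 (X - a)) k_ge0).
have : 0 <= 1 - k by rewrite subr_ge0.
move/(mulr_ge0 (mulr_ge0 (sqr_ge0 X) (ltW m_gt0))).
nra.
Qed.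

(* The constants \mathcal C_1 and \mathcal C_2 of the statement, with N for n = e^T e. *)
Definition calC1 (R : realType) (N alpha beta X : R) := Num.sqrt
  (((N - alpha ^+ 2) * X ^+ 2 * (1 - (beta / alpha) ^+ 2)) /
   (N - alpha ^+ 2 + (X - alpha) ^+ 2 * (1 - (beta / alpha) ^+ 2))).

Definition calC2 (R : realType) (N alpha beta : R) :=
  N^-1 * (alpha * Num.sqrt (N - beta ^+ 2) - beta * Num.sqrt (N - alpha ^+ 2)).

Section Constants.
Variables (R : realType) (N alpha beta : R).
Hypotheses (beta_gt0 : 0 < beta) (beta_le : beta <= alpha) (alpha_lt : alpha ^+ 2 < N).

Let alpha_gt0 : 0 < alpha := lt_le_trans beta_gt0 beta_le.

Lemma calC2_ge0 : 0 <= calC2 N alpha beta.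
Proof.
have N_gt0 : 0 < N by apply: le_lt_trans alpha_lt; apply: sqr_ge0.
apply: mulr_ge0; first by rewrite invr_ge0 ltW.
rewrite subr_ge0 ler_pM ?sqrtr_ge0 ?(ltW beta_gt0) // ler_wsqrtr // lerB //.
by rewrite ler_sqr ?nnegrE ?(ltW beta_gt0) ?(ltW alpha_gt0).
Qed.

Lemma calC1_le X : 0 <= X -> calC1 N alpha beta X <= X.
Proof.
move=> X_ge0; apply: sqrt_scaled_ratio_le => //; first by rewrite subr_gt0.
rewrite subr_ge0 lerBlDr lerDl sqr_ge0 andbT.
rewrite expr_le1 ?divr_ge0 ?(ltW beta_gt0) ?(ltW alpha_gt0) //.
by rewrite ler_pdivrMr // mul1r.
Qed.
End Constants.

Section Cones.
Variables (R : realType) (n : nat) (e : 'rV[R]_n).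

Lemma KconeP g x : 0 <= g ->
  Kcone e g x <-> 0 <= dotp e x /\ g ^+ 2 * dotp x x <= dotp e x ^+ 2.
Proof.
move=> g_ge0; have gx_ge0 : 0 <= g * enorm x by rewrite mulr_ge0 ?enorm_ge0.
rewrite /Kcone -enorm_sqr -exprMn; split.
- move=> gx; have ex_ge0 := le_trans gx_ge0 gx.
  by split; rewrite // ler_sqr ?nnegrE.
- by case=> ex_ge0; rewrite ler_sqr ?nnegrE.
Qed.

Lemma Kcone_self g : 0 <= g -> g ^+ 2 <= dotp e e -> Kcone e g e.
Proof.
move=> g_ge0 g2; apply/KconeP => //; split; first exact: dotpp_ge0.
by rewrite expr2 ler_wpM2r ?dotpp_ge0.
Qed.

Lemma KdualZ g k s : 0 <= k -> Kdual e g s -> Kdual e g (k *: s).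
Proof. by move=> k_ge0 s_dual x /s_dual; rewrite dotpZr; apply: mulr_ge0. Qed.

(* the gradient at x of y |-> e^T y - alpha ||y||, whose 0-superlevel set is K_e(alpha) *)
Definition Kcone_normal (alpha : R) (x : 'rV[R]_n) := e - (alpha / enorm x) *: x.

Lemma Kdual_Kcone_normal alpha x : 0 <= alpha -> Kdual e alpha (Kcone_normal alpha x).
Proof.
move=> alpha_ge0 y yK; rewrite /Kcone_normal dotpBr dotpZr (dotpC y) (dotpC y x).
have ax_le : alpha / enorm x * enorm x <= alpha.
  have [->|x0] := eqVneq (enorm x) 0; first by rewrite mulr0.
  by rewrite mulfVK.
have xy := le_trans (ler_norm _) (ler_dotp_enorm x y).
have := ler_wpM2l (divr_ge0 alpha_ge0 (enorm_ge0 x)) xy.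
have := ler_wpM2r (enorm_ge0 y) ax_le.
rewrite /Kcone in yK; rewrite mulrA; lra.
Qed.

Section BoundaryNormal.
Variables (alpha : R) (x : 'rV[R]_n).
Hypotheses (x_neq0 : x != 0) (x_boundary : dotp e x = alpha * enorm x).

Lemma Kcone_normal_dotpx : dotp (Kcone_normal alpha x) x = 0.
Proof.
have X_neq0 : enorm x != 0 by rewrite gt_eqF ?enorm_gt0.
by rewrite dotpBl dotpZl x_boundary -enorm_sqr; field.
Qed.

Lemma Kcone_normal_dotpe : dotp (Kcone_normal alpha x) e = dotp e e - alpha ^+ 2.
Proof.
have X_neq0 : enorm x != 0 by rewrite gt_eqF ?enorm_gt0.
by rewrite dotpBl dotpZl (dotpC x) x_boundary; field.
Qed.
End BoundaryNormal.

Lemma Kdual_orth_sqr_le beta s : 0 <= beta -> beta ^+ 2 <= dotp e e -> Kdual e beta s ->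
  (dotp e e - beta ^+ 2) * (dotp e e * dotp s s - dotp e s ^+ 2) <= beta ^+ 2 * dotp e s ^+ 2.
Proof.
move=> beta_ge0 beta_le s_dual.
set N := dotp e e in beta_le *; set F := dotp e s.
have F_ge0 : 0 <= F by apply: s_dual; apply: Kcone_self.
set D := N * dotp s s - F ^+ 2.
have D_ge0 : 0 <= D by rewrite subr_ge0 dotp_sqr_le.
pose w := N *: s - F *: e.
have ew : dotp e w = 0 by rewrite dotpBr !dotpZr -/F -/N mulrC subrr.
have ws : dotp w s = D by rewrite dotpBl !dotpZl -/F /D expr2.
have ww : dotp w w = N * D.
  by rewrite {1}/w dotpBl !dotpZl (dotpC s) ws ew mulr0 subr0.
clearbody w.
pose sg := Num.sqrt D; pose rb := Num.sqrt (N - beta ^+ 2).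
have sg2 : sg ^+ 2 = D by rewrite sqr_sqrtr.
have rb2 : rb ^+ 2 = N - beta ^+ 2 by rewrite sqr_sqrtr // subr_ge0.
have [sg_ge0 rb_ge0] : 0 <= sg /\ 0 <= rb by rewrite !sqrtr_ge0.
(* the test vector lies on the boundary of K_e(beta), on the far side of e from s *)
pose x := (beta * sg) *: e - rb *: w.
have xK : Kcone e beta x.
  apply/KconeP => //.
  have ex : dotp e x = beta * sg * N by rewrite dotpBr !dotpZr ew mulr0 subr0.
  have xx : dotp x x = N * N * D.
    rewrite !(dotpBl, dotpBr, dotpZl, dotpZr) ww (dotpC w) ew -/N.
    transitivity (beta ^+ 2 * sg ^+ 2 * N + rb ^+ 2 * (N * D)); first ring.
    by rewrite sg2 rb2; ring.
  rewrite ex xx !exprMn sg2 expr2; split; first by rewrite !mulr_ge0 ?dotpp_ge0.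
  by rewrite -[_ * D * _]mulrA (mulrC D) expr2.
have := s_dual x xK; rewrite dotpBl !dotpZl -/F ws -sg2 => xs_ge0.
have [sg0|sg_neq0] := eqVneq sg 0.
  by rewrite sg0 [0 ^+ 2]expr2 mul0r mulr0 mulr_ge0 ?sqr_ge0.
have rbF : rb * sg <= beta * F.
  have sg_gt0 : 0 < sg by rewrite lt_def sg_neq0.
  by rewrite -(ler_pM2r sg_gt0) -mulrA -expr2 mulrAC -subr_ge0.
have := rbF; rewrite -ler_sqr ?nnegrE ?mulr_ge0 //.
by rewrite !exprMn rb2 sg2.
Qed.

Lemma Kdual_enorm_le beta s : 0 < beta -> beta ^+ 2 <= dotp e e -> Kdual e beta s ->
  Num.sqrt (dotp e e - beta ^+ 2) * enorm s <= dotp e s.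
Proof.
move=> beta_gt0 beta_le s_dual.
have F_ge0 : 0 <= dotp e s by apply: s_dual; apply: Kcone_self; rewrite // ltW.
have N_gt0 : 0 < dotp e e by apply: lt_le_trans beta_le; rewrite exprn_gt0.
have := Kdual_orth_sqr_le (ltW beta_gt0) beta_le s_dual.
rewrite -ler_sqr ?nnegrE ?mulr_ge0 ?enorm_ge0 ?sqrtr_ge0 //.
rewrite exprMn sqr_sqrtr ?subr_ge0 // enorm_sqr => h; nra.
Qed.

Lemma dotp_Kcone_boundary_ge alpha beta x s :
  0 < beta -> beta <= alpha -> alpha ^+ 2 < dotp e e ->
  dotp e x = alpha * enorm x ->
  Num.sqrt (dotp e e - beta ^+ 2) * enorm s <= dotp e s ->
  enorm x * calC2 (dotp e e) alpha beta * enorm s <= dotp s x.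
Proof.
move=> beta_gt0 beta_le alpha_lt ex sF.
have := dotp_orth_sqr_le e x s; rewrite -(enorm_sqr x) -(enorm_sqr s).
set N := dotp e e in alpha_lt sF *; set X := enorm x in ex *; set S := enorm s in sF *.
set E := dotp e x in ex *; set F := dotp e s in sF *; set P := dotp s x => orth.
set ra := Num.sqrt (N - alpha ^+ 2); set rb := Num.sqrt (N - beta ^+ 2) in sF *.
have alpha_gt0 : 0 < alpha := lt_le_trans beta_gt0 beta_le.
have beta2_le : beta ^+ 2 <= alpha ^+ 2.
  by rewrite ler_sqr ?nnegrE ?(ltW beta_gt0) ?(ltW alpha_gt0).
have N_gt0 : 0 < N by apply: le_lt_trans alpha_lt; apply: sqr_ge0.
have ra2 : ra ^+ 2 = N - alpha ^+ 2 by rewrite sqr_sqrtr // subr_ge0 ltW.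
have rb2 : rb ^+ 2 = N - beta ^+ 2 by rewrite sqr_sqrtr // subr_ge0 (le_trans beta2_le) ?ltW.
have [X_ge0 S_ge0] : 0 <= X /\ 0 <= S by rewrite !enorm_ge0.
have [ra_ge0 rb_ge0] : 0 <= ra /\ 0 <= rb by rewrite !sqrtr_ge0.
have x_orth : N * X ^+ 2 - E ^+ 2 = (X * ra) ^+ 2 by rewrite ex !exprMn ra2; ring.
have s_orth : N * S ^+ 2 - F ^+ 2 <= (beta * S) ^+ 2.
  have : (rb * S) ^+ 2 <= F ^+ 2.
    by rewrite ler_sqr ?nnegrE ?mulr_ge0 // (le_trans _ sF) ?mulr_ge0.
  by rewrite !exprMn rb2; lra.
have : `|N * P - E * F| <= X * ra * (beta * S).
  rewrite -ler_sqr ?nnegrE ?mulr_ge0 ?(ltW beta_gt0) // real_normK ?num_real //.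
  by rewrite (le_trans orth) // x_orth [in leRHS]exprMn ler_wpM2l ?sqr_ge0.
rewrite ler_norml ex => /andP[lower _].
have xF : alpha * X * (rb * S) <= alpha * X * F by rewrite ler_wpM2l // mulr_ge0 // ltW.
have -> : X * calC2 N alpha beta * S = N^-1 * (X * S * (alpha * rb - beta * ra)).
  by rewrite /calC2 -/ra -/rb mulrAC mulrCA.
rewrite -(ler_pM2l N_gt0) mulrA mulfV ?gt_eqF // mul1r; nra.
Qed.
End Cones.

Section ConeMinimizer.
Variables (R : realType) (n : nat) (e : 'rV[R]_n) (alpha : R).
Variables (L : {vspace 'rV[R]_n}) (s x0 : 'rV[R]_n).
Hypotheses (alpha_gt0 : 0 < alpha) (x0_neq0 : x0 != 0).
Hypotheses (x0_feas : x0 - e \in L) (x0K : Kcone e alpha x0).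
Hypothesis x0_min : forall x, x - e \in L -> Kcone e alpha x -> dotp s x0 <= dotp s x.

(* Either hypothesis on d keeps x0 + t d in K_e(alpha) for all small t > 0. *)
Lemma minimizer_dir_ge0 d : d \in L ->
  0 < dotp e x0 ^+ 2 - alpha ^+ 2 * dotp x0 x0 \/
  0 < dotp e x0 * dotp e d - alpha ^+ 2 * dotp x0 d ->
  0 <= dotp s d.
Proof.
move=> dL hd; set E := dotp e x0 in hd *.
have [_ gap_le] := (KconeP e x0 (ltW alpha_gt0)).1 x0K.
have gap_ge0 : 0 <= E ^+ 2 - alpha ^+ 2 * dotp x0 x0 by rewrite subr_ge0.
have E_gt0 : 0 < E by apply: lt_le_trans x0K; rewrite mulr_gt0 ?enorm_gt0.
have hd2 : 0 < E ^+ 2 - alpha ^+ 2 * dotp x0 x0 \/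
    0 < 2 * (E * dotp e d - alpha ^+ 2 * dotp x0 d).
  by case: hd; [left | right; rewrite mulr_gt0].
have [t1 t1_gt0 gap_pos] := quadratic_gt0_near0
  (dotp e d ^+ 2 - alpha ^+ 2 * dotp d d) gap_ge0 hd2.
have [t2 t2_gt0 E_pos] := @quadratic_gt0_near0 _ E (dotp e d) 0 (ltW E_gt0) (or_introl E_gt0).
pose t := Order.min t1 t2.
have t_le1 : t <= t1 by rewrite ge_min lexx.
have t_le2 : t <= t2 by rewrite ge_min lexx orbT.
have t_gt0 : 0 < t by rewrite lt_min t1_gt0 t2_gt0.
have y_feas : x0 + t *: d - e \in L by rewrite addrAC memvD // memvZ.
have yK : Kcone e alpha (x0 + t *: d).
  apply/KconeP; first exact: ltW.
  have := gap_pos t t_gt0 t_le1; have := E_pos t t_gt0 t_le2.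
  rewrite !(dotpDl, dotpDr, dotpZl, dotpZr) (dotpC d x0) -/E mul0r addr0.
  move=> ey_gt0 gap_gt0; split; first by apply: ltW; rewrite mulrC.
  apply: ltW; rewrite -subr_gt0; move: gap_gt0; congr (0 < _); ring.
have := x0_min y_feas yK; rewrite dotpDr dotpZr lerDl.
by rewrite pmulr_rge0.
Qed.

Lemma minimizer_boundary : ~ orthc L s -> dotp e x0 = alpha * enorm x0.
Proof.
move=> s_not_perp; apply/eqP; rewrite eq_le x0K andbT leNgt; apply/negP => x0_int.
apply: s_not_perp => v vL.
have gap_gt0 : 0 < dotp e x0 ^+ 2 - alpha ^+ 2 * dotp x0 x0.
  have ax_ge0 : 0 <= alpha * enorm x0 by rewrite mulr_ge0 ?enorm_ge0 ?ltW.
  by rewrite subr_gt0 -enorm_sqr -exprMn ltr_sqr ?nnegrE // ltW ?(le_lt_trans ax_ge0).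
have := minimizer_dir_ge0 vL (or_introl gap_gt0).
have vNL : - v \in L by rewrite memvN.
have := minimizer_dir_ge0 vNL (or_introl gap_gt0).
by rewrite dotpNr (dotpC v); lra.
Qed.

Hypotheses (s_not_perp : ~ orthc L s) (alpha_lt : alpha ^+ 2 < dotp e e).
Let x0_boundary : dotp e x0 = alpha * enorm x0 := minimizer_boundary s_not_perp.
Local Notation a := (Kcone_normal e alpha x0).

Lemma minimizer_normal_ge0 d : d \in L -> 0 < dotp a d -> 0 <= dotp s d.
Proof.
move=> dL ad_gt0; apply: minimizer_dir_ge0 => //; right.
have X_gt0 := enorm_gt0 x0_neq0.
have -> : dotp e x0 * dotp e d - alpha ^+ 2 * dotp x0 d = alpha * enorm x0 * dotp a d.
  by rewrite dotpBl dotpZl x0_boundary; field; rewrite gt_eqF.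
by rewrite !pmulr_rgt0.
Qed.

Lemma Kcone_normal_dotp_dir : dotp a (e - x0) = dotp e e - alpha ^+ 2.
Proof. by rewrite dotpBr Kcone_normal_dotpe // Kcone_normal_dotpx // subr0. Qed.

Lemma minimizer_dotp_dir_ge0 : 0 <= dotp s (e - x0).
Proof.
rewrite dotpBr subr_ge0; apply: x0_min; first by rewrite subrr mem0v.
by apply: Kcone_self; rewrite ?ltW.
Qed.

(* s is nonnegative on the open half-space {a > 0} of L, hence on its closure *)
Lemma minimizer_normal_perp w : w \in L -> dotp a w = 0 -> dotp s w = 0.
Proof.
have d0L : e - x0 \in L by rewrite -opprB memvN.
have Nalpha_gt0 : 0 < dotp e e - alpha ^+ 2 by rewrite subr_gt0.
have c_ge0 := minimizer_dotp_dir_ge0.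
have perp_ge0 u : u \in L -> dotp a u = 0 -> 0 <= dotp s u.
  move=> uL au; apply/ler_addgt0Pr => eps eps_gt0.
  pose k := eps / (dotp s (e - x0) + 1).
  have k_gt0 : 0 < k by rewrite divr_gt0 //; lra.
  have kc_le : k * dotp s (e - x0) <= eps.
    by rewrite mulrAC ler_pdivrMr; [nra | lra].
  have ukL : u + k *: (e - x0) \in L by rewrite memvD // memvZ.
  have := minimizer_normal_ge0 ukL.
  rewrite dotpDr dotpZr au Kcone_normal_dotp_dir add0r mulr_gt0 // => /(_ isT).
  by rewrite dotpDr dotpZr; lra.
move=> wL aw; apply/eqP; rewrite eq_le perp_ge0 // andbT -oppr_ge0 -dotpNr.
by rewrite perp_ge0 ?memvN // dotpNr aw oppr0.
Qed.

Lemma minimizer_KKT :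
  exists2 lam, 0 <= lam & orthc L (lam *: a - s) /\ dotp e (s - lam *: a) = dotp s x0.
Proof.
have N_neq0 : dotp e e - alpha ^+ 2 != 0 by rewrite gt_eqF // subr_gt0.
exists (dotp s (e - x0) / (dotp e e - alpha ^+ 2)).
  by rewrite divr_ge0 ?minimizer_dotp_dir_ge0 // ltW // subr_gt0.
split.
- move=> v vL; pose c := dotp a v / (dotp e e - alpha ^+ 2).
  have wL : v - c *: (e - x0) \in L by rewrite memvB // memvZ // -opprB memvN.
  have := minimizer_normal_perp wL.
  rewrite (dotpBr a) dotpZr Kcone_normal_dotp_dir /c mulfVK // subrr => /(_ erefl).
  rewrite (dotpBr s v) dotpZr => /eqP; rewrite subr_eq0 => /eqP sv.
  by rewrite (dotpBr v) dotpZr (dotpC v a) (dotpC v s) sv /c; field.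
- rewrite (dotpBr e) dotpZr (dotpC e a) Kcone_normal_dotpe // mulfVK //.
  by rewrite dotpBr (dotpC s e); ring.
Qed.
End ConeMinimizer.

Theorem proposition5p1 (R : realType) (n : nat) (e : 'rV[R]_n) (alpha beta : R)
  (L : {vspace 'rV[R]_n}) (sbar xbar : 'rV[R]_n) :
  enorm e = Num.sqrt (n%:R) ->
  0 < beta -> beta <= alpha -> alpha < Num.sqrt (n%:R) ->
  interior_of (Kdual e beta) sbar ->
  e \notin L ->
  ~ orthc L sbar ->
  (* xbar solves min sbar^T x s.t. x in e + L, x in K_e(alpha) *)
  (xbar - e \in L) -> Kcone e alpha xbar ->
  (forall x, x - e \in L -> Kcone e alpha x -> dotp sbar xbar <= dotp sbar x) ->
  let C1 := Num.sqrt
      (((n%:R - alpha ^+ 2) * enorm xbar ^+ 2 * (1 - (beta / alpha) ^+ 2)) /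
       (n%:R - alpha ^+ 2 + (enorm xbar - alpha) ^+ 2 * (1 - (beta / alpha) ^+ 2))) in
  let C2 := (n%:R)^-1 *
      (alpha * Num.sqrt (n%:R - beta ^+ 2) - beta * Num.sqrt (n%:R - alpha ^+ 2)) in
  exists s' : 'rV[R]_n,
    orthc L (s' - sbar) /\ Kdual e alpha s' /\
    C1 * C2 * enorm sbar <= dotp e (sbar - s').
Proof.
move=> e_norm beta_gt0 beta_le alpha_lt s_int eL s_not_perp x_feas xK x_min C1 C2.
have alpha_gt0 : 0 < alpha := lt_le_trans beta_gt0 beta_le.
have ee : dotp e e = n%:R by rewrite -enorm_sqr e_norm sqr_sqrtr ?ler0n.
have alpha2_lt : alpha ^+ 2 < dotp e e.
  by rewrite -enorm_sqr e_norm ltr_sqr ?nnegrE ?sqrtr_ge0 ?(ltW alpha_gt0).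
have beta2_le : beta ^+ 2 <= alpha ^+ 2.
  by rewrite ler_sqr ?nnegrE ?(ltW beta_gt0) ?(ltW alpha_gt0).
have x_neq0 : xbar != 0 by apply: contraNneq eL => x0; rewrite -memvN -sub0r -x0.
have [lam lam_ge0 [perp gap]] :=
  minimizer_KKT alpha_gt0 x_neq0 x_feas xK x_min s_not_perp alpha2_lt.
exists (lam *: Kcone_normal e alpha xbar); split; first exact: perp.
split; first by apply: KdualZ => //; apply: Kdual_Kcone_normal; rewrite ltW.
have sF := Kdual_enorm_le beta_gt0 (le_trans beta2_le (ltW alpha2_lt)) (interior_ofW s_int).
have := dotp_Kcone_boundary_ge beta_gt0 beta_le alpha2_lt
  (minimizer_boundary alpha_gt0 x_neq0 x_feas xK x_min s_not_perp) sF.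
rewrite gap; apply: le_trans; rewrite ler_wpM2r ?enorm_ge0 //.
rewrite /C1 /C2 -ee; apply: ler_wpM2r; first exact: calC2_ge0.
exact: calC1_le (enorm_ge0 _).
Qed.
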